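(* Let $X$ be a topological space, $Y$ a compact metric space, $A$ a finite subset of $Y$ and $\epsilon>0$. Let $Z$ denote either $U_\epsilon(Y)$ or $\mathcal{U}_\epsilon(A)$. If $f,g:X\to Z$ are continuous and the map $f\cup g:X\to Z$, $(f\cup g)(x)=f(x)\cup g(x)$, is well-defined (i.e. $f(x)\cup g(x)\in Z$ for all $x$), then $f\cup g$ is continuous and homotopic to both $f$ and $g$.
   Context: For a compact metric space $Y$, $2^Y$ is the set of nonempty closed subsets of $Y$ with the upper semifinite topology, whose base consists of the sets $B(U)=\{C\in 2^Y\mid C\subset U\}$ for $U\subseteq Y$ open. $U_\epsilon(Y)=\{C\in 2^Y\mid \mathrm{diam}(C)<\epsilon\}$ with the subspace topology. For finite $A\subset Y$, $\mathcal{U}_\epsilon(A)=\{C\subseteq A\mid C\neq\emptyset,\ \mathrm{diam}(C)<\epsilon\}$, a finite poset under inclusion regarded as a finite $T_0$ space whose open sets are the down-sets. *)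

From HB Require Import structures.
From mathcomp Require Import all_boot all_order all_algebra.
From mathcomp Require Import all_classical all_reals all_analysis.
Set Implicit Arguments. Unset Strict Implicit. Unset Printing Implicit Defensive.
Import Order.TTheory GRing.Theory Num.Theory.
Import numFieldTopology.Exports.
Local Open Scope classical_set_scope.
Local Open Scope ring_scope.

Section Defs.
Context {R : realType} {Y : metricType R}.

Definition diam (C : set Y) : R :=
  sup [set mdist p.1 p.2 | p in C `*` C].

Record Ueps (eps : R) := MkUeps {
  ue_set : set Y;
  ue_ne : ue_set !=set0;
  ue_closed : closed ue_set;
  ue_diam : diam ue_set < eps }.

Record UepsA (A : set Y) (eps : R) := MkUepsA {
  uf_set : set Y;
  uf_ne : uf_set !=set0;
  uf_sub : uf_set `<=` A;
  uf_diam : diam uf_set < eps }.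
End Defs.

HB.instance Definition _ (R : realType) (Y : metricType R) (eps : R) :=
  gen_eqMixin (@Ueps R Y eps).
HB.instance Definition _ (R : realType) (Y : metricType R) (eps : R) :=
  gen_choiceMixin (@Ueps R Y eps).
HB.instance Definition _ (R : realType) (Y : metricType R) A (eps : R) :=
  gen_eqMixin (@UepsA R Y A eps).
HB.instance Definition _ (R : realType) (Y : metricType R) A (eps : R) :=
  gen_choiceMixin (@UepsA R Y A eps).

(* upper semifinite topology (restricted to U_eps(Y)): generated by the
   basic sets B(U) = [set C | C `<=` U], U open in Y *)
Definition usf_base (R : realType) (Y : metricType R) (eps : R)
  (U : set Y) : set (@Ueps R Y eps) := [set C | ue_set C `<=` U].

HB.instance Definition _ (R : realType) (Y : metricType R) (eps : R) :=
  @isSubBaseTopological.Build (@Ueps R Y eps) (set Y) open (@usf_base R Y eps).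

(* finite T0 space: open sets are the down-sets for inclusion *)
Definition downset (R : realType) (Y : metricType R) A (eps : R)
  (W : set (@UepsA R Y A eps)) : Prop :=
  forall C C', W C -> uf_set C' `<=` uf_set C -> W C'.

HB.instance Definition _ (R : realType) (Y : metricType R) A (eps : R) :=
  @isSubBaseTopological.Build (@UepsA R Y A eps) (set (@UepsA R Y A eps))
    (@downset R Y A eps) id.

Definition homotopic (R : realType) (X Z : topologicalType) (f g : X -> Z) :=
  exists H : X * R -> Z,
    {within [set: X] `*` [set t : R | 0 <= t <= 1], continuous H} /\
    (forall x, H (x, 0) = f x) /\ (forall x, H (x, 1) = g x).

From HB Require Import structures.
From mathcomp Require Import all_boot all_order all_algebra.
From mathcomp Require Import all_classical all_reals all_analysis.
From mathcomp Require Import finmap.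
Import Order.TTheory GRing.Theory Num.Theory.
Import numFieldTopology.Exports.
Local Open Scope classical_set_scope.
Local Open Scope ring_scope.

(* In both U_eps(Y) and calU_eps(A) every neighbourhood of a point C contains
   an open neighbourhood of the form {D | D is contained in U}, with U open in
   Y (resp. U = C).  Such a set is closed under unions, which makes f \cup g
   continuous; it is also closed under passing to subsets, so whenever
   f(x) is contained in h(x) for all x, the map which is h at time 0 and f at
   all positive times is continuous: a homotopy from h to f. *)

Section SubBaseTopology.
Context {T : topologicalType} {I : choiceType} (D : set I) (b : I -> set T).
Hypothesis openE : open = [set \bigcup_(B in E) B | E in subset^~ (finI_from D b)].

Lemma finI_from_open (B : set T) : finI_from D b B -> open B.
Proof.
rewrite openE => DbB.
by exists [set B]; [move=> _ -> | exact: bigcup_set1].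
Qed.

Lemma finI_from_nbhs (c : T) (O : set T) :
  nbhs c O -> exists2 B, finI_from D b B /\ B c & B `<=` O.
Proof.
rewrite nbhsE => -[U [oU Uc] UO].
move: oU Uc UO; rewrite openE => -[E EI <-] [B EB Bc] EO.
exists B; first by split=> //; exact: EI.
by move=> z Bz; apply: EO; exists B.
Qed.

End SubBaseTopology.

Section SetValuedMaps.
Context {R : realType} {X : topologicalType} {Y : Type} {T : topologicalType}.
Variable S : T -> set Y.

Definition below (U : set Y) : set T := [set z | S z `<=` U].

Lemma below_bigcap (J : Type) (P : set J) (U : J -> set Y) :
  below (\bigcap_(j in P) U j) = \bigcap_(j in P) below (U j).
Proof.
apply/seteqP; split=> z; first by move=> zU j Pj y /zU; apply.
by move=> zU; apply: sub_bigcap => j /zU.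
Qed.

Hypothesis below_nbhs : forall (c : T) (O : set T), nbhs c O ->
  exists U, open_nbhs c (below U) /\ below U `<=` O.

Lemma nbhs_preimage_below {f : X -> T} {x : X} {U : set Y} :
  continuous f -> open (below U) -> S (f x) `<=` U -> nbhs x (f @^-1` below U).
Proof. by move=> cf oU fxU; apply: cf; exact: open_nbhs_nbhs. Qed.

Lemma continuous_setU (f g h : X -> T) : continuous f -> continuous g ->
  (forall x, S (h x) = S (f x) `|` S (g x)) -> continuous h.
Proof.
move=> cf cg hfg x O /below_nbhs [U [[oU hxU] UO]].
have [fxU gxU] : S (f x) `<=` U /\ S (g x) `<=` U by rewrite -subUset -hfg.
apply: filterS (filterI (nbhs_preimage_below cf oU fxU)
                        (nbhs_preimage_below cg oU gxU)).
by move=> y [fyU gyU]; apply: UO; rewrite /below /= hfg subUset.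
Qed.

Lemma homotopic_sub (f h : X -> T) : continuous f -> continuous h ->
  (forall x, S (f x) `<=` S (h x)) -> homotopic R h f.
Proof.
move=> cf ch fh.
pose H (p : X * R) := if p.2 <= 0 then h p.1 else f p.1.
exists H; split; last by split=> x; rewrite /H /= ?lexx ?ler10.
apply: continuous_subspaceT => -[x t] O /below_nbhs [U [[oU HU] UO]].
case: (leP t 0) => [t_le0|t_gt0].
- have hxU : S (h x) `<=` U by move: HU; rewrite /below /H /= t_le0.
  exists (h @^-1` below U, setT) => /=.
    by split; [exact: nbhs_preimage_below | exact: filterT].
  move=> [y s] /= [hyU _]; apply: UO; rewrite /below /H /=.
  by case: ifP => _ //; exact: subset_trans (fh y) hyU.
- have fxU : S (f x) `<=` U by move: HU; rewrite /below /H /= leNgt t_gt0.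
  exists (f @^-1` below U, [set s : R | 0 < s]) => /=.
    split; first exact: nbhs_preimage_below.
    by apply: open_nbhs_nbhs; split=> //; exact: open_gt.
  by move=> [y s] /= [fyU s_gt0]; apply: UO; rewrite /below /H /= leNgt s_gt0.
Qed.

Lemma setU_continuous_homotopic (f g h : X -> T) :
  continuous f -> continuous g -> (forall x, S (h x) = S (f x) `|` S (g x)) ->
  [/\ continuous h, homotopic R h f & homotopic R h g].
Proof.
move=> cf cg hfg; have ch := continuous_setU _ _ _ cf cg hfg.
split=> //; apply: homotopic_sub => // x; rewrite hfg.
- exact: subsetUl.
- exact: subsetUr.
Qed.

End SetValuedMaps.

Lemma Ueps_below_nbhs (R : realType) (Y : metricType R) (eps : R)
    (c : Ueps eps) (O : set (Ueps eps)) : nbhs c O ->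
  exists U : set Y, open_nbhs c (below (@ue_set R Y eps) U) /\
                    below (@ue_set R Y eps) U `<=` O.
Proof.
have open_finI := finI_from_open open (@usf_base R Y eps) erefl.
move=> /(finI_from_nbhs open (@usf_base R Y eps) erefl) [_ [[F sF <-] cB] BO].
exists (\bigcap_(V in [set` F]) V); rewrite below_bigcap.
by split=> //; split=> //; apply: open_finI; exists F.
Qed.

Lemma UepsA_below_nbhs (R : realType) (Y : metricType R) (A : set Y) (eps : R)
    (c : UepsA A eps) (O : set (UepsA A eps)) : nbhs c O ->
  exists U : set Y, open_nbhs c (below (@uf_set R Y A eps) U) /\
                    below (@uf_set R Y A eps) U `<=` O.
Proof.
have open_finI := finI_from_open (@downset R Y A eps) id erefl.
move=> /(finI_from_nbhs (@downset R Y A eps) id erefl) [_ [[F sF <-] cB] BO].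
exists (uf_set c); split; first split=> //.
  apply: open_finI; apply: finI_from1 => z z' zc z'z.
  exact: subset_trans z'z zc.
move=> z zc; apply: BO => W FW.
have /[!in_setE] W_down := sF W FW.
exact: W_down (cB W FW) zc.
Qed.

Theorem lemma4p2 (R : realType) (X : topologicalType) (Y : metricType R)
  (hY : compact [set: Y]) (A : set Y) (hA : finite_set A)
  (eps : R) (heps : 0 < eps) :
  (forall f g h : X -> @Ueps R Y eps,
      continuous f -> continuous g ->
      (forall x, ue_set (h x) = ue_set (f x) `|` ue_set (g x)) ->
      [/\ continuous h, homotopic R h f & homotopic R h g]) /\
  (forall f g h : X -> @UepsA R Y A eps,
      continuous f -> continuous g ->
      (forall x, uf_set (h x) = uf_set (f x) `|` uf_set (g x)) ->
      [/\ continuous h, homotopic R h f & homotopic R h g]).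
Proof.
split=> f g h cf cg hfg.
- exact: (setU_continuous_homotopic _ (@Ueps_below_nbhs R Y eps) f g h cf cg hfg).
- exact: (setU_continuous_homotopic _ (@UepsA_below_nbhs R Y A eps) f g h cf cg hfg).
Qed.
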